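(* Let $G=\langle g,h\rangle$ be a non-cyclic torsion-free group. Let $G_1=\langle g_1,h_1\rangle$ and $G_2=\langle g_2,h_2\rangle$ be two copies of $G$ (with $g_i,h_i$ corresponding to $g,h$), and let $H=G_1*_{\langle g_1\rangle=\langle g_2\rangle}G_2$ be the free product with amalgamation in which $g_1$ is identified with $g_2$; write $g$ for this common element of $H$. Let $K=\langle h_2^{-1}h_1,g\rangle\le H$. Then for every nonzero $n\in\mathbb{Z}$, \[(h_2^{-1}h_1)^n\notin\langle\langle g\rangle\rangle_K.\]
   Context: $\langle\langle g\rangle\rangle_K$ denotes the normal closure of $g$ in $K$. *)

From Stdlib Require Import ZArith.

Record group := Group {
  carrier :> Type;
  gmul : carrier -> carrier -> carrier;
  ginv : carrier -> carrier;
  gone : carrier;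
  gmulA : forall x y z, gmul x (gmul y z) = gmul (gmul x y) z;
  gmul1l : forall x, gmul gone x = x;
  gmul1r : forall x, gmul x gone = x;
  gmulVl : forall x, gmul (ginv x) x = gone;
  gmulVr : forall x, gmul x (ginv x) = gone
}.

Arguments gmul {g}.
Arguments ginv {g}.
Arguments gone {g}.

Fixpoint gpow {G : group} (x : G) (n : nat) : G :=
  match n with O => gone | S m => gmul x (gpow x m) end.

Definition gzpow {G : group} (x : G) (n : Z) : G :=
  match n with
  | Z0 => gone
  | Zpos p => gpow x (Pos.to_nat p)
  | Zneg p => ginv (gpow x (Pos.to_nat p))
  end.

Inductive gen {G : group} (S : G -> Prop) : G -> Prop :=
| gen_in : forall x, S x -> gen S x
| gen_one : gen S gone
| gen_mul : forall x y, gen S x -> gen S y -> gen S (gmul x y)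
| gen_inv : forall x, gen S x -> gen S (ginv x).

Definition generated_by2 {G : group} (g h : G) : Prop :=
  forall x : G, gen (fun y => y = g \/ y = h) x.

Definition cyclic_group (G : group) : Prop :=
  exists c : G, forall x : G, gen (fun y => y = c) x.

Definition torsion_free (G : group) : Prop :=
  forall (x : G) (n : nat), (0 < n)%nat -> gpow x n = gone -> x = gone.

Definition is_hom {G L : group} (f : G -> L) : Prop :=
  forall x y : G, f (gmul x y) = gmul (f x) (f y).

(* (H, i1, i2) is the free product with amalgamation G_1 *_{<g_1> = <g_2>} G_2
   of two copies of G, in which g_1 is identified with g_2, characterized by its
   universal property (pushout of G <- <g> -> G in the category of groups). *)
Definition is_amalgam (G : group) (g : G) (H : group) (i1 i2 : G -> H) : Prop :=
  is_hom i1 /\ is_hom i2 /\ i1 g = i2 g /\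
  forall (L : group) (f1 f2 : G -> L),
    is_hom f1 -> is_hom f2 -> f1 g = f2 g ->
    (exists phi : H -> L, is_hom phi /\
        (forall x, phi (i1 x) = f1 x) /\ (forall x, phi (i2 x) = f2 x)) /\
    (forall phi psi : H -> L, is_hom phi -> is_hom psi ->
        (forall x, phi (i1 x) = f1 x) -> (forall x, phi (i2 x) = f2 x) ->
        (forall x, psi (i1 x) = f1 x) -> (forall x, psi (i2 x) = f2 x) ->
        forall y, phi y = psi y).

Definition normal_closure_in {G : group} (K : G -> Prop) (a : G) : G -> Prop :=
  gen (fun y => exists k, K k /\ y = gmul (ginv k) (gmul a k)).

(* Map H to the unrestricted wreath product Z^G ⋊ G, sending the first copy of G
   to (0, y) and the second to (δy, y), where δ is the coboundary of the
   indicator function of C = <g>; the two maps agree on g because C is invariant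
   under left multiplication by g.  The elements whose G-part lies in C and whose
   Z^G-part is constant on C form a subgroup, on which evaluation at 1 is a
   homomorphism to Z.  The image of K lies in this subgroup, g is sent to 0 and,
   since h is not in C, h_2^-1 h_1 is sent to -1; so this character of K kills
   <<g>>_K but no nonzero power of h_2^-1 h_1. *)
From Stdlib Require Import ZArith Lia.
From Stdlib Require Import ClassicalEpsilon FunctionalExtensionality.

Open Scope Z_scope.

Section GroupFacts.
Variable G : group.

Lemma ginv_unique (a b : G) : gmul a b = gone -> a = ginv b.
Proof.
  intro E. rewrite <- (gmul1r _ a), <- (gmulVr _ b), gmulA, E. apply gmul1l.
Qed.

Lemma ginvK (y : G) : ginv (ginv y) = y.
Proof. symmetry. apply ginv_unique, gmulVr. Qed.

Lemma ginv1 : ginv (@gone G) = gone.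
Proof. symmetry. apply ginv_unique, gmul1l. Qed.

Lemma ginvM (a b : G) : ginv (gmul a b) = gmul (ginv b) (ginv a).
Proof.
  symmetry. apply ginv_unique.
  rewrite <- gmulA, (gmulA _ (ginv a)), gmulVl, gmul1l, gmulVl. reflexivity.
Qed.

Definition subgroup_pred (P : G -> Prop) : Prop :=
  P gone /\ (forall x y, P x -> P y -> P (gmul x y)) /\ (forall x, P x -> P (ginv x)).

Definition additive_on (P : G -> Prop) (chi : G -> Z) : Prop :=
  forall x y, P x -> P y -> chi (gmul x y) = chi x + chi y.

Lemma gen_subgroup (S : G -> Prop) : subgroup_pred (gen S).
Proof. repeat split; constructor; assumption. Qed.

Lemma gen_subset (S P : G -> Prop) :
  subgroup_pred P -> (forall y, S y -> P y) -> forall y, gen S y -> P y.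
Proof.
  intros (P1 & PM & PV) SP y Hy.
  induction Hy; auto.
Qed.

Lemma subgroup_memMr (C : G -> Prop) (c y : G) :
  subgroup_pred C -> C c -> (C (gmul y c) <-> C y).
Proof.
  intros (_ & CM & CV) Cc. split; intro Hy; auto.
  replace y with (gmul (gmul y c) (ginv c)) by
    (rewrite <- gmulA, gmulVr, gmul1r; reflexivity).
  auto.
Qed.

Lemma subgroup_memMl (C : G -> Prop) (c y : G) :
  subgroup_pred C -> C c -> (C (gmul c y) <-> C y).
Proof.
  intros (_ & CM & CV) Cc. split; intro Hy; auto.
  replace y with (gmul (ginv c) (gmul c y)) by
    (rewrite gmulA, gmulVl, gmul1l; reflexivity).
  auto.
Qed.

Lemma generated_by2_cyclic (g h : G) :
  generated_by2 g h -> gen (fun y => y = g) h -> cyclic_group G.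
Proof.
  intros Hgen Hh. exists g. intro y.
  apply (gen_subset (fun z => z = g \/ z = h) _ (gen_subgroup _)), Hgen.
  intros z [-> | ->]; [constructor; reflexivity | exact Hh].
Qed.

End GroupFacts.

Arguments subgroup_pred {G}.
Arguments additive_on {G}.

Section Homomorphisms.
Variables (A B : group) (f : A -> B).
Hypothesis f_hom : is_hom f.

Lemma hom1 : f gone = gone.
Proof.
  pose proof (f_equal (gmul (ginv (f gone))) (f_hom gone gone)) as E.
  rewrite gmul1l, gmulA, gmulVl, gmul1l in E. symmetry. exact E.
Qed.

Lemma homV (y : A) : f (ginv y) = ginv (f y).
Proof. apply ginv_unique. rewrite <- f_hom, gmulVl. exact hom1. Qed.

Lemma subgroup_pred_preimage (P : B -> Prop) :
  subgroup_pred P -> subgroup_pred (fun y => P (f y)).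
Proof.
  intros (P1 & PM & PV). repeat split.
  - rewrite hom1. exact P1.
  - intros x y Hx Hy. rewrite f_hom. auto.
  - intros x Hx. rewrite homV. auto.
Qed.

Lemma additive_on_comp (P : B -> Prop) (chi : B -> Z) :
  additive_on P chi -> additive_on (fun y => P (f y)) (fun y => chi (f y)).
Proof. intros chiM x y Hx Hy. rewrite f_hom. auto. Qed.

End Homomorphisms.

Section PartialCharacter.
Variables (G : group) (P : G -> Prop) (chi : G -> Z).
Hypotheses (P_subgroup : subgroup_pred P) (chi_additive : additive_on P chi).

Lemma character1 : chi gone = 0.
Proof.
  destruct P_subgroup as (P1 & _ & _).
  pose proof (chi_additive gone gone P1 P1) as E. rewrite gmul1l in E. lia.
Qed.

Lemma characterV (x : G) : P x -> chi (ginv x) = - chi x.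
Proof.
  destruct P_subgroup as (_ & _ & PV). intro Px.
  pose proof (chi_additive x (ginv x) Px (PV x Px)) as E.
  rewrite gmulVr, character1 in E. lia.
Qed.

Lemma character_gpow (x : G) (m : nat) :
  P x -> P (gpow x m) /\ chi (gpow x m) = Z.of_nat m * chi x.
Proof.
  destruct P_subgroup as (P1 & PM & _). intro Px.
  induction m as [| m [Pm Em]]; cbn [gpow].
  - split; [exact P1 | exact character1].
  - split; [auto |]. rewrite chi_additive, Em by assumption. lia.
Qed.

Lemma character_gzpow (x : G) (n : Z) : P x -> chi (gzpow x n) = n * chi x.
Proof.
  intro Px. destruct n as [| p | p]; unfold gzpow.
  - exact character1.
  - rewrite (proj2 (character_gpow x _ Px)), positive_nat_Z. reflexivity.
  - destruct (character_gpow x (Pos.to_nat p) Px) as [Pp Ep].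
    rewrite characterV, Ep, positive_nat_Z by exact Pp. rewrite <- Pos2Z.opp_pos. ring.
Qed.

Lemma character_normal_closure (K : G -> Prop) (a : G) :
  (forall k, K k -> P k) -> P a -> chi a = 0 ->
  forall y, normal_closure_in K a y -> chi y = 0.
Proof.
  destruct P_subgroup as (P1 & PM & PV). intros KP Pa chi_a y Hy.
  enough (P y /\ chi y = 0) by tauto.
  induction Hy as [z (k & Kk & ->) | | y1 y2 _ [P1' E1] _ [P2' E2] | z _ [Pz Ez]].
  - pose proof (KP k Kk) as Pk. split; [auto |].
    rewrite !chi_additive, characterV, chi_a by auto. lia.
  - split; [exact P1 | exact character1].
  - split; [auto |]. rewrite chi_additive by assumption. lia.
  - split; [auto |]. rewrite characterV by assumption. lia.
Qed.

End PartialCharacter.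

Definition zindicator (P : Prop) : Z :=
  if excluded_middle_informative P then 1 else 0.

Lemma zindicator_iff (P Q : Prop) : (P <-> Q) -> zindicator P = zindicator Q.
Proof.
  unfold zindicator. intro E.
  destruct (excluded_middle_informative P), (excluded_middle_informative Q); tauto.
Qed.

Lemma zindicator_true (P : Prop) : P -> zindicator P = 1.
Proof. unfold zindicator. destruct (excluded_middle_informative P); tauto. Qed.

Lemma zindicator_false (P : Prop) : ~ P -> zindicator P = 0.
Proof. unfold zindicator. destruct (excluded_middle_informative P); tauto. Qed.

Section Wreath.
Variable G : group.

Definition wr_mul (p q : (G -> Z) * G) : (G -> Z) * G :=
  (fun w => fst p w + fst q (gmul (ginv (snd p)) w), gmul (snd p) (snd q)).

Definition wr_inv (p : (G -> Z) * G) : (G -> Z) * G :=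
  (fun w => - fst p (gmul (snd p) w), ginv (snd p)).

Definition wr_one : (G -> Z) * G := (fun _ => 0, gone).

Lemma wr_mulA p q r : wr_mul p (wr_mul q r) = wr_mul (wr_mul p q) r.
Proof.
  destruct p as [a y], q as [b z], r as [c u]. unfold wr_mul; simpl. f_equal.
  - apply functional_extensionality; intro w. rewrite ginvM, gmulA. lia.
  - apply gmulA.
Qed.

Lemma wr_mul1l p : wr_mul wr_one p = p.
Proof.
  destruct p as [a y]. unfold wr_mul, wr_one; simpl. f_equal.
  - apply functional_extensionality; intro w. rewrite ginv1, gmul1l. lia.
  - apply gmul1l.
Qed.

Lemma wr_mul1r p : wr_mul p wr_one = p.
Proof.
  destruct p as [a y]. unfold wr_mul, wr_one; simpl. f_equal.
  - apply functional_extensionality; intro w. lia.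
  - apply gmul1r.
Qed.

Lemma wr_mulVl p : wr_mul (wr_inv p) p = wr_one.
Proof.
  destruct p as [a y]. unfold wr_mul, wr_inv, wr_one; simpl. f_equal.
  - apply functional_extensionality; intro w. rewrite ginvK. lia.
  - apply gmulVl.
Qed.

Lemma wr_mulVr p : wr_mul p (wr_inv p) = wr_one.
Proof.
  destruct p as [a y]. unfold wr_mul, wr_inv, wr_one; simpl. f_equal.
  - apply functional_extensionality; intro w. rewrite gmulA, gmulVr, gmul1l. lia.
  - apply gmulVr.
Qed.

Definition wreath : group :=
  Group ((G -> Z) * G) wr_mul wr_inv wr_one wr_mulA wr_mul1l wr_mul1r wr_mulVl wr_mulVr.

Definition wr_top (y : G) : wreath := (fun _ => 0, y).

Definition wr_coboundary (b : G -> Z) (y : G) : wreath :=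
  (fun w => b (gmul (ginv y) w) - b w, y).

Lemma wr_top_hom : is_hom wr_top.
Proof. intros y z. reflexivity. Qed.

Lemma wr_coboundary_hom (b : G -> Z) : is_hom (wr_coboundary b).
Proof.
  intros y z. unfold wr_coboundary; simpl. unfold wr_mul; simpl. f_equal.
  apply functional_extensionality; intro w. rewrite ginvM, <- gmulA. lia.
Qed.

Lemma wr_coboundary_fixed (b : G -> Z) (y : G) :
  (forall w, b (gmul (ginv y) w) = b w) -> wr_coboundary b y = wr_top y.
Proof.
  intro Hb. unfold wr_coboundary, wr_top. f_equal.
  apply functional_extensionality; intro w. rewrite Hb. lia.
Qed.

Lemma wr_coboundary_inv_mul_top (b : G -> Z) (y : G) :
  gmul (ginv (wr_coboundary b y)) (wr_top y) =
  ((fun w => b (gmul y w) - b w, gone) : wreath).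
Proof.
  simpl. unfold wr_mul, wr_inv; simpl. f_equal.
  - apply functional_extensionality; intro w.
    rewrite gmulA, gmulVl, gmul1l. lia.
  - apply gmulVl.
Qed.

Section ConstantOnSubgroup.
Variable C : G -> Prop.
Hypothesis C_subgroup : subgroup_pred C.

Definition wr_const (p : wreath) : Prop :=
  C (snd p) /\ forall c, C c -> fst p c = fst p gone.

Definition wr_val (p : wreath) : Z := fst p gone.

Lemma wr_const_subgroup : subgroup_pred wr_const.
Proof.
  destruct C_subgroup as (C1 & CM & CV). split; [split; [exact C1 | reflexivity] | split].
  - intros [a y] [b z] [Cy Ha] [Cz Hb]; simpl in *. split; [simpl; auto |].
    intros c Cc. unfold wr_mul; simpl.
    rewrite gmul1r, (Ha c Cc), (Hb _ (CM _ _ (CV _ Cy) Cc)), (Hb _ (CV _ Cy)).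
    reflexivity.
  - intros [a y] [Cy Ha]; simpl in *. split; [simpl; auto |].
    intros c Cc. unfold wr_inv; simpl.
    rewrite gmul1r, (Ha _ (CM _ _ Cy Cc)), (Ha _ Cy). reflexivity.
Qed.

Lemma wr_val_additive : additive_on wr_const wr_val.
Proof.
  destruct C_subgroup as (_ & _ & CV).
  intros [a y] [b z] [Cy _] [_ Hb]; simpl in *.
  unfold wr_val, wr_mul; simpl. rewrite gmul1r, (Hb _ (CV _ Cy)). reflexivity.
Qed.

Lemma wr_coboundary_indicator_fixed (y : G) :
  C y -> wr_coboundary (fun w => zindicator (C w)) y = wr_top y.
Proof.
  intro Cy. apply wr_coboundary_fixed. intro w.
  apply zindicator_iff, subgroup_memMl; [exact C_subgroup |].
  apply C_subgroup, Cy.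
Qed.

Lemma wr_const_top (y : G) : C y -> wr_const (wr_top y) /\ wr_val (wr_top y) = 0.
Proof. intro Cy. split; [split; [exact Cy | reflexivity] | reflexivity]. Qed.

Lemma wr_const_indicator_shift (y : G) :
  ~ C y ->
  let p := ((fun w => zindicator (C (gmul y w)) - zindicator (C w), gone) : wreath) in
  wr_const p /\ wr_val p = -1.
Proof.
  destruct C_subgroup as (C1 & _ & _). intros Cy p.
  assert (Ep : forall c, C c -> fst p c = -1).
  { intros c Cc. simpl.
    rewrite (zindicator_true (C c) Cc), zindicator_false; [reflexivity |].
    intro Cyc. exact (Cy (proj1 (subgroup_memMr _ _ _ _ C_subgroup Cc) Cyc)). }
  unfold wr_const, wr_val. rewrite (Ep gone C1).
  split; [split; [exact C1 | intros c Cc; exact (Ep c Cc)] | reflexivity].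
Qed.

End ConstantOnSubgroup.

End Wreath.

Theorem lemma3p3 (G : group) (g h : G)
  (HGgen : generated_by2 g h) (Hnc : ~ cyclic_group G) (Htf : torsion_free G)
  (H : group) (i1 i2 : G -> H) (Ham : is_amalgam G g H i1 i2) :
  let x := gmul (ginv (i2 h)) (i1 h) in
  let K := gen (fun y => y = x \/ y = i1 g) in
  forall n : Z, n <> 0%Z -> ~ normal_closure_in K (i1 g) (gzpow x n).
Proof.
  intros x K n Hn Hcl.
  destruct Ham as (_ & _ & _ & universal).
  set (C := gen (fun y : G => y = g)).
  assert (C_subgroup : subgroup_pred C) by apply gen_subgroup.
  assert (Cg : C g) by (constructor; reflexivity).
  assert (hC : ~ C h) by (intro Ch; exact (Hnc (generated_by2_cyclic _ _ _ HGgen Ch))).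
  set (b := fun w => zindicator (C w)).
  destruct (universal (wreath G) (@wr_top G) (wr_coboundary G b)
              (wr_top_hom G) (wr_coboundary_hom G b)
              (eq_sym (wr_coboundary_indicator_fixed G C C_subgroup g Cg)))
    as [(phi & phi_hom & phi1 & phi2) _].
  set (P := fun y => wr_const G C (phi y)).
  set (chi := fun y => wr_val G (phi y)).
  assert (P_subgroup : subgroup_pred P)
    by exact (subgroup_pred_preimage _ _ _ phi_hom _ (wr_const_subgroup G C C_subgroup)).
  assert (chi_additive : additive_on P chi)
    by exact (additive_on_comp _ _ _ phi_hom _ _ (wr_val_additive G C C_subgroup)).
  assert (Px : P x /\ chi x = -1).
  { unfold P, chi, x. rewrite phi_hom, homV, phi1, phi2 by exact phi_hom.
    rewrite wr_coboundary_inv_mul_top. exact (wr_const_indicator_shift G C C_subgroup h hC). }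
  assert (Pg : P (i1 g) /\ chi (i1 g) = 0).
  { unfold P, chi. rewrite phi1. exact (wr_const_top G C g Cg). }
  assert (KP : forall k, K k -> P k)
    by (apply gen_subset; [exact P_subgroup | intros y [-> | ->]; tauto]).
  pose proof (character_normal_closure H P chi P_subgroup chi_additive K (i1 g)
                KP (proj1 Pg) (proj2 Pg) _ Hcl) as chi_xn.
  rewrite (character_gzpow H P chi P_subgroup chi_additive x n (proj1 Px)), (proj2 Px) in chi_xn.
  lia.
Qed.
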